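(* Let $n\geq 7$ and $p\geq 2$. Then $\rho(\mathbf{S}_{p}(U_{5}))<\rho(\mathbf{S}_{p}(U_{4}))$.
   Context: All graphs are simple and connected; $d_i$ is the degree of $v_i$. The $p$-Sombor matrix $\mathbf{S}_{p}(G)$ has $(i,j)$-entry $(d_i^{p}+d_j^{p})^{1/p}$ if $v_iv_j\in E(G)$ and $0$ otherwise; $\rho(\mathbf{S}_{p}(G))$ is its largest eigenvalue. $U_4$ is the unicyclic graph of order $n$ consisting of a triangle $xyz$, with $n-5$ pendant vertices attached to $x$ and $2$ pendant vertices attached to $y$. $U_5$ is the unicyclic graph of order $n$ consisting of a triangle $xyz$, a vertex $w$ adjacent to $x$, and $n-4$ pendant vertices attached to $w$. *)

From HB Require Import structures.
From mathcomp Require Import all_boot all_order all_algebra.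
From mathcomp Require Import all_classical all_reals all_analysis.
Set Implicit Arguments. Unset Strict Implicit. Unset Printing Implicit Defensive.
Import Order.TTheory GRing.Theory Num.Theory.
Local Open Scope ring_scope.

(* Simple graphs on vertex set 'I_n given by a symmetric irreflexive rel. *)
Definition degree (n : nat) (e : rel 'I_n) (i : 'I_n) : nat := #|[set j | e i j]|.

Definition psombor_mx (R : realType) (n : nat) (p : R) (e : rel 'I_n) : 'M[R]_n :=
  \matrix_(i, j) (if e i j then
      (((degree e i)%:R `^ p + (degree e j)%:R `^ p) `^ p^-1)%R else 0).

Definition is_largest_eigenvalue (R : realType) (n : nat) (A : 'M[R]_n) (r : R) : Prop :=
  eigenvalue A r /\ forall a, eigenvalue A a -> a <= r.

(* U_4: triangle x=0,y=1,z=2; pendants 3..n-3 (n-5 of them) at x;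
   pendants n-2, n-1 at y. *)
Definition U4_nat (n a b : nat) : bool :=
  [|| (a == 0%N) && (b == 1%N), (a == 0%N) && (b == 2%N), (a == 1%N) && (b == 2%N),
      (a == 0%N) && (3 <= b <= n - 3)%N
    | (a == 1%N) && (n - 2 <= b)%N ].
Definition U4 (n : nat) : rel 'I_n :=
  fun i j => U4_nat n i j || U4_nat n j i.

(* U_5: triangle x=0,y=1,z=2; w=3 adjacent to x; pendants 4..n-1 (n-4) at w. *)
Definition U5_nat (a b : nat) : bool :=
  [|| (a == 0%N) && (b == 1%N), (a == 0%N) && (b == 2%N), (a == 1%N) && (b == 2%N),
      (a == 0%N) && (b == 3%N)
    | (a == 3%N) && (4 <= b)%N ].
Definition U5 (n : nat) : rel 'I_n :=
  fun i j => U5_nat i j || U5_nat j i.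

From HB Require Import structures.
From mathcomp Require Import all_boot all_order all_algebra.
From mathcomp Require Import all_classical all_reals all_analysis.
From mathcomp Require Import zify ring lra.
Import Order.TTheory GRing.Theory Num.Theory.
Local Open Scope ring_scope.
Set Implicit Arguments. Unset Strict Implicit. Unset Printing Implicit Defensive.

(* A nonnegative matrix with a positive left eigenvector x for r has no real eigenvalue above
   r, and when it is symmetric any nonnegative y with s y <= y A, strictly somewhere, forces
   s < r.  Both unicyclic graphs have equitable partitions (U5: x | y,z | w | pendants at w;
   U4: x | y | z | pendants at x | pendants at y), so their Perron vectors are constant on the
   classes; they are built from a positive root of the secular equation of the quotient matrix,
   found by the intermediate value theorem.  Transplanting the Perron vector of U5 onto U4 (w to
   x, x to y, pendants to pendants) gives such a strict subeigenvector of U4 for rho(U5), hence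
   rho(U5) < rho(U4); p >= 2 enters only through (a^p + b^p)^(1/p) <= sqrt(a^2 + b^2). *)

Section PositiveEigenvector.
Variables (R : realFieldType) (n : nat) (A : 'M[R]_n) (x : 'rV[R]_n) (r : R).
Hypotheses (x_gt0 : forall i, 0 < x 0 i) (xA : x *m A = r *: x).

Lemma eigenvalue_le_pos_eigenvector a :
  (forall i j, 0 <= A i j) -> eigenvalue A a -> a <= r.
Proof.
move=> A_ge0 /eigenvalueP [v vA v_neq0].
have [j0 vj0_neq0] : exists j, v 0 j != 0.
  apply/existsP; apply: contraNT v_neq0 => /existsPn v0.
  by apply/eqP/rowP => j; rewrite mxE; apply/eqP/negPn/v0.
(* Compare v with x at a coordinate j maximizing |v_j| / x_j. *)
pose F j := `|v 0 j| / x 0 j.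
case: (@arg_maxP _ R _ j0 xpredT F isT) => j _ F_max.
have x_neq0 i : x 0 i != 0 by rewrite gt_eqF.
have Fj_gt0 : 0 < F j.
  by apply: lt_le_trans (F_max j0 isT); rewrite divr_gt0 ?normr_gt0.
have v_le i : `|v 0 i| <= F j * x 0 i by rewrite -ler_pdivrMr //; apply: F_max.
have vj : `|v 0 j| = F j * x 0 j by rewrite divfK.
have : `|a| * `|v 0 j| <= r * `|v 0 j|.
  have vAj : \sum_i v 0 i * A i j = a * v 0 j.
    by have := congr1 (fun M : 'rV[R]_n => M 0 j) vA; rewrite !mxE.
  have xAj : \sum_i x 0 i * A i j = r * x 0 j.
    by have := congr1 (fun M : 'rV[R]_n => M 0 j) xA; rewrite !mxE.
  rewrite -normrM -vAj vj mulrCA -xAj mulr_sumr.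
  apply: le_trans (ler_norm_sum _ _ _) _; apply: ler_sum => i _.
  by rewrite normrM (ger0_norm (A_ge0 i j)) mulrA ler_wpM2r.
have vj_gt0 : 0 < `|v 0 j| by rewrite vj mulr_gt0.
by rewrite ler_pM2r // => /(le_trans (ler_norm a)).
Qed.

Lemma strict_subeigenvector_lt (y : 'rV[R]_n) s j0 :
  (forall i j, A i j = A j i) -> (forall j, 0 <= y 0 j) ->
  (forall j, s * y 0 j <= (y *m A) 0 j) -> s * y 0 j0 < (y *m A) 0 j0 -> s < r.
Proof.
move=> A_sym y_ge0 y_le y_lt.
(* Pair both sides with x: by symmetry, (y A) . x = r (y . x). *)
pose yx := \sum_j y 0 j * x 0 j.
have yAx : \sum_j (y *m A) 0 j * x 0 j = r * yx.
  under eq_bigr do rewrite mxE mulr_suml.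
  rewrite exchange_big mulr_sumr; apply: eq_bigr => i _.
  have := congr1 (fun M : 'rV[R]_n => M 0 i) xA; rewrite !mxE => xAi.
  rewrite mulrCA -xAi mulr_sumr; apply: eq_bigr => j _.
  by rewrite A_sym mulrAC mulrA.
have : s * yx < r * yx.
  rewrite -yAx mulr_sumr (bigD1 j0) //= [ltRHS](bigD1 j0) //=.
  apply: ltr_leD; first by rewrite mulrA ltr_pM2r.
  by apply: ler_sum => j _; rewrite mulrA ler_wpM2r // ltW.
have yx_ge0 : 0 <= yx by apply: sumr_ge0 => j _; rewrite mulr_ge0 // ltW.
move=> lt_yx; rewrite ltNge; apply: contraTN lt_yx => rs.
by rewrite -leNgt ler_wpM2r.
Qed.

End PositiveEigenvector.

Lemma largest_eigenvalue_pos_eigenvector (R : realType) n (A : 'M[R]_n) (x : 'rV[R]_n) r :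
  (0 < n)%N -> (forall i j, 0 <= A i j) -> (forall i, 0 < x 0 i) -> x *m A = r *: x ->
  is_largest_eigenvalue A r.
Proof.
move=> n_gt0 A_ge0 x_gt0 xA; split; last first.
  by move=> a; apply: eigenvalue_le_pos_eigenvector.
apply/eigenvalueP; exists x => //; apply/eqP => x0.
by have := x_gt0 (Ordinal n_gt0); rewrite x0 mxE ltxx.
Qed.

Section SomborWeight.
Variable R : realType.
Implicit Types p q x y : R.

(* Locked, and moreover generalized away before any call to lra/nra/ring: these tactics
   compare atoms by unification, which is extremely slow on weights (already on [w 3 2]
   against [w 2 2]). *)
Fact sombor_weight_key : unit. Proof. by []. Qed.
Definition sombor_weight p x y : R :=
  locked_with sombor_weight_key ((x `^ p + y `^ p) `^ p^-1).

Lemma sombor_weightE p x y : sombor_weight p x y = (x `^ p + y `^ p) `^ p^-1.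
Proof. exact: locked_withE. Qed.

Lemma powRVK p x : 0 < p -> 0 <= x -> (x `^ p) `^ p^-1 = x.
Proof. by move=> p_gt0 x_ge0; rewrite -powRrM mulfV ?gt_eqF ?powRr1. Qed.

Lemma powRKV p x : 0 < p -> 0 <= x -> (x `^ p^-1) `^ p = x.
Proof. by move=> p_gt0 x_ge0; rewrite powRAC powRVK. Qed.

Lemma sombor_weightC p x y : sombor_weight p x y = sombor_weight p y x.
Proof. by rewrite !sombor_weightE addrC. Qed.

Lemma sombor_weight_ge0 p x y : 0 <= sombor_weight p x y.
Proof. by rewrite sombor_weightE powR_ge0. Qed.

Lemma sombor_weight_le p x y x' y' : 0 < p ->
  0 <= x <= x' -> 0 <= y <= y' -> sombor_weight p x y <= sombor_weight p x' y'.
Proof.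
move=> p_gt0 /andP[x_ge0 xx'] /andP[y_ge0 yy'].
have pow_le z z' : 0 <= z -> z <= z' -> z `^ p <= z' `^ p.
  by move=> z_ge0 zz'; rewrite ge0_ler_powR ?nnegrE ?(ltW p_gt0) ?(le_trans z_ge0).
rewrite !sombor_weightE ge0_ler_powR ?nnegrE ?invr_ge0 ?addr_ge0 ?powR_ge0 ?(ltW p_gt0) //.
by rewrite lerD ?pow_le.
Qed.

Lemma sombor_weight_gel p x y : 0 < p -> 0 <= x -> x <= sombor_weight p x y.
Proof.
move=> p_gt0 x_ge0; rewrite -[leLHS](powRVK p_gt0 x_ge0) sombor_weightE.
by rewrite ge0_ler_powR ?nnegrE ?lerDl ?invr_ge0 ?addr_ge0 ?powR_ge0 ?(ltW p_gt0).
Qed.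

Lemma sombor_weight_gt0 p x y : 0 < p -> 0 < x -> 0 < sombor_weight p x y.
Proof. by move=> p_gt0 x_gt0; rewrite (lt_le_trans x_gt0) ?sombor_weight_gel ?ltW. Qed.

Lemma sombor_weight2 x y : 0 <= x -> 0 <= y ->
  sombor_weight 2 x y = Num.sqrt (x ^+ 2 + y ^+ 2).
Proof.
by move=> x_ge0 y_ge0; rewrite sombor_weightE !powR_mulrn ?powR12_sqrt ?addr_ge0 ?sqr_ge0.
Qed.

Lemma sombor_weight_antimono p q x y : 0 < q <= p -> 0 <= x -> 0 <= y ->
  sombor_weight p x y <= sombor_weight q x y.
Proof.
move=> /andP[q_gt0 qp] x_ge0 y_ge0; have p_gt0 := lt_le_trans q_gt0 qp.
set s := sombor_weight p x y.
have [s0|s_gt0] := eqVneq s 0; first by rewrite s0 sombor_weight_ge0.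
have {}s_gt0 : 0 < s by rewrite lt_def s_gt0 sombor_weight_ge0.
have spE : s `^ p = x `^ p + y `^ p by rewrite /s sombor_weightE powRKV ?addr_ge0 ?powR_ge0.
(* For [0 <= z <= s] this is [(z/s)^p <= (z/s)^q]. *)
have cross z : 0 <= z <= s -> z `^ p * s `^ q <= z `^ q * s `^ p.
  case/andP=> z_ge0 zs; have [->|z_neq0] := eqVneq z 0.
    by rewrite !powR0 ?gt_eqF ?mul0r.
  have [u u01 ->] : exists2 u, 0 < u <= 1 & z = s * u.
    exists (z / s); last by rewrite mulrC divfK ?gt_eqF.
    by rewrite ler_pdivrMr // mul1r zs andbT divr_gt0 // lt_def z_neq0.
  have uq_ge_up : u `^ p <= u `^ q by apply: ger_powR.
  have ss_ge0 : 0 <= s `^ p * s `^ q by rewrite mulr_ge0 ?powR_ge0.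
  rewrite !powRM ?(ltW s_gt0) ?(ltW (andP u01).1) //.
  by rewrite mulrAC [leRHS]mulrC mulrA ler_wpM2l.
have xs : 0 <= x <= s by rewrite x_ge0 sombor_weight_gel.
have ys : 0 <= y <= s by rewrite y_ge0 /s sombor_weightC sombor_weight_gel.
have : s `^ q * s `^ p <= (x `^ q + y `^ q) * s `^ p.
  by rewrite mulrC [X in X * _ <= _]spE !mulrDl lerD ?cross.
rewrite (ler_pM2r (powR_gt0 p s_gt0)) => sq_le.
rewrite -(powRVK q_gt0 (ltW s_gt0)) sombor_weightE.
by rewrite ge0_ler_powR ?nnegrE ?invr_ge0 ?addr_ge0 ?powR_ge0 ?(ltW q_gt0).
Qed.

Lemma sombor_weight_sqr_le p x y : 2 <= p -> 0 <= x -> 0 <= y ->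
  sombor_weight p x y ^+ 2 <= x ^+ 2 + y ^+ 2.
Proof.
move=> p_ge2 x_ge0 y_ge0.
have w_le : sombor_weight p x y <= sombor_weight 2 x y.
  by rewrite sombor_weight_antimono // p_ge2 andbT.
rewrite sombor_weight2 // in w_le.
by rewrite -[leRHS]sqr_sqrtr ?addr_ge0 ?sqr_ge0 // ler_sqr ?nnegrE ?sombor_weight_ge0 ?sqrtr_ge0.
Qed.

End SomborWeight.

Definition U5_adj (i j : nat) : bool := U5_nat i j || U5_nat j i.

(* Vectors on U5 constant on the classes x = 0, {y, z} = {1, 2}, w = 3 and the pendants. *)
Definition U5_vec {T : Type} (a b c d : T) (k : nat) : T :=
  if k == 0%N then a else if (k <= 2)%N then b else if k == 3%N then c else d.

Section U5Sums.
Variables (V : nmodType) (n : nat) (F : nat -> V).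
Hypothesis n_ge7 : (7 <= n)%N.

Lemma sum_U5_adj (j : 'I_n) :
  \sum_(i < n) (if U5_adj i j then F i else 0) =
  U5_vec (F 1%N + F 2%N + F 3%N) (F 0%N + F (3 - j)%N)
         (F 0%N + \sum_(4 <= i < n) F i) (F 3%N) j.
Proof.
have tail : \sum_(4 <= i < n) (if U5_adj i j then F i else 0) =
            if j == 3%N :> nat then \sum_(4 <= i < n) F i else 0.
  case: eqP => [->|j_neq3].
    by apply: eq_big_nat => i i4; rewrite (_ : U5_adj i 3 = true) // /U5_adj /U5_nat; lia.
  rewrite big_nat_cond big1 // => i /andP[i4 _].
  by rewrite (_ : U5_adj i j = false) //; rewrite /U5_adj /U5_nat; lia.
rewrite -(big_mkord xpredT (fun i => if U5_adj i j then F i else 0)).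
rewrite 4?big_ltn; try lia.
rewrite {}tail.
by case: j => [[|[|[|[|j]]]] /= hj]; rewrite ?addr0 ?add0r ?addrA.
Qed.
End U5Sums.

Lemma U5_vec_map {T T' : Type} (f : T -> T') a b c d k :
  f (U5_vec a b c d k) = U5_vec (f a) (f b) (f c) (f d) k.
Proof. by rewrite /U5_vec; do 3?case: ifP. Qed.

Lemma degreeE n (e : rel 'I_n) i : degree e i = \sum_(j < n) (if e i j then 1 else 0)%N.
Proof. by rewrite /degree -sum1_card big_mkcond; apply: eq_bigr => j _; rewrite inE. Qed.

Lemma psombor_mxE (R : realType) n (p : R) (e : rel 'I_n) i j :
  psombor_mx p e i j =
  if e i j then sombor_weight p (degree e i)%:R (degree e j)%:R else 0.
Proof. by rewrite mxE sombor_weightE. Qed.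

Lemma U5_vec_ge4 {T : Type} (a b c d : T) k : (4 <= k)%N -> U5_vec a b c d k = d.
Proof. by case: k => [|[|[|[|k]]]]. Qed.

Section U5Matrix.
Variables (R : realType) (n : nat) (p : R).
Hypothesis n_ge7 : (7 <= n)%N.
Local Notation w := (sombor_weight p).
Local Notation m := ((n - 3)%:R : R).

Lemma degree_U5 (i : 'I_n) : degree (@U5 n) i = U5_vec 3 2 (n - 3)%N 1 i.
Proof.
rewrite degreeE (eq_bigr (fun j : 'I_n => if U5_adj j i then 1 else 0)%N).
  rewrite (sum_U5_adj (fun=> 1%N)) // sum_nat_const_nat.
  by case: i => [[|[|[|[|i]]]] hi]; rewrite /U5_vec /=; lia.
by move=> j _; rewrite /U5 /U5_adj orbC.
Qed.

Lemma U5_mulmx (a b c d : R) (j : 'I_n) :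
  ((\row_(k < n) U5_vec a b c d k) *m psombor_mx p (@U5 n)) 0 j =
  U5_vec (b * w 2 3 *+ 2 + c * w m 3) (a * w 3 2 + b * w 2 2)
         (a * w 3 m + d * w 1 m *+ (n - 4)%N) (c * w m 1) j.
Proof.
pose deg k : R := (U5_vec 3%N 2%N (n - 3)%N 1%N k)%:R.
pose F k := U5_vec a b c d k * w (deg k) (deg j).
rewrite mxE (eq_bigr (fun i : 'I_n => if U5_adj i j then F i else 0)); last first.
  move=> i _; rewrite psombor_mxE !mxE !degree_U5.
  by rewrite /U5 -/(U5_adj i j); case: ifP; rewrite ?mulr0.
have tail : \sum_(4 <= i < n) F i = d * w 1 (deg j) *+ (n - 4)%N.
  rewrite -sumr_const_nat; apply: eq_big_nat => i /andP[i4 _].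
  by rewrite /F /deg !(U5_vec_ge4 _ _ _ _ i4).
rewrite (sum_U5_adj _ n_ge7) {}tail /F /deg; clear F deg.
move: (nat_of_ord j) => k.
by case: k => [|[|[|[|k]]]]; rewrite /U5_vec /= ?mulr2n.
Qed.

End U5Matrix.

Definition U4_adj (n i j : nat) : bool := U4_nat n i j || U4_nat n j i.

(* Vectors on U4 constant on the classes x = 0, y = 1, z = 2, the pendants [3, n - 2) at x
   and the pendants [n - 2, n) at y. *)
Definition U4_vec {T : Type} (n : nat) (a b c d e : T) (k : nat) : T :=
  if k == 0%N then a else if k == 1%N then b else if k == 2%N then c
  else if (k < n - 2)%N then d else e.

Ltac decide_bool e :=
  first [ rewrite (_ : e = true); last by unfold U4_adj, U4_nat; lia
        | rewrite (_ : e = false); last by unfold U4_adj, U4_nat; lia ].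

Ltac decide_nat_bools :=
  repeat match goal with
  | |- context [U4_adj ?n ?a ?b] => decide_bool (U4_adj n a b)
  | |- context [(?a == ?b)%N] => decide_bool (a == b)%N
  | |- context [(?a <= ?b)%N] => decide_bool (a <= b)%N
  end.

Variant U4_class_spec (n : nat) : nat -> Prop :=
  | U4_class_x : U4_class_spec n 0
  | U4_class_y : U4_class_spec n 1
  | U4_class_z : U4_class_spec n 2
  | U4_class_px k of (3 <= k < n - 2)%N : U4_class_spec n k
  | U4_class_py k of (3 <= k)%N & (n - 2 <= k)%N : U4_class_spec n k.

Lemma U4_classP n k : U4_class_spec n k.
Proof.
case: k => [|[|[|k]]]; [exact: U4_class_x | exact: U4_class_y | exact: U4_class_z |].
by case: (ltnP k.+3 (n - 2)) => k_lt; [apply: U4_class_px | apply: U4_class_py].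
Qed.

Section U4Sums.
Variables (V : nmodType) (n : nat) (F : nat -> V).
Hypothesis n_ge7 : (7 <= n)%N.

Lemma sum_U4_adj (j : 'I_n) :
  \sum_(i < n) (if U4_adj n i j then F i else 0) =
  U4_vec n (F 1%N + F 2%N + \sum_(3 <= i < n - 2) F i)
           (F 0%N + F 2%N + (F (n - 2)%N + F (n - 1)%N)) (F 0%N + F 1%N) (F 0%N) (F 1%N) j.
Proof.
have mid : \sum_(3 <= i < n - 2) (if U4_adj n i j then F i else 0) =
           if j == 0%N :> nat then \sum_(3 <= i < n - 2) F i else 0.
  case: eqP => [->|j_neq0].
    by apply: eq_big_nat => i i3; decide_nat_bools.
  by rewrite big_nat_cond big1 => [//|i /andP[i3 _]]; decide_nat_bools.
have tail (G : nat -> V) : \sum_(n - 2 <= i < n) G i = G (n - 2)%N + G (n - 1)%N.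
  rewrite big_ltn; last lia.
  rewrite big_ltn; last lia.
  rewrite big_geq; last lia.
  by rewrite addr0 (_ : (n - 2).+1 = n - 1)%N; last lia.
rewrite -(big_mkord xpredT (fun i => if U4_adj n i j then F i else 0)).
rewrite 3?big_ltn; try lia.
rewrite (@big_cat_nat _ _ _ (n - 2)) /=; try lia.
rewrite {}mid {}tail.
move: (ltn_ord j); case: (U4_classP n j) => [| | |k k_x|k k_y1 k_y2] k_lt.
all: by rewrite /U4_vec; decide_nat_bools; rewrite ?add0r ?addr0 ?addrA.
Qed.
End U4Sums.

Lemma U4_vec_px {T : Type} n (a b c d e : T) k : (3 <= k < n - 2)%N -> U4_vec n a b c d e k = d.
Proof. by move=> k_px; rewrite /U4_vec; decide_nat_bools. Qed.

Lemma U4_vec_py {T : Type} n (a b c d e : T) k :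
  (3 <= k)%N -> (n - 2 <= k)%N -> U4_vec n a b c d e k = e.
Proof. by move=> k3 k_py; rewrite /U4_vec; decide_nat_bools. Qed.

Section U4Matrix.
Variables (R : realType) (n : nat) (p : R).
Hypothesis n_ge7 : (7 <= n)%N.
Local Notation w := (sombor_weight p).
Local Notation m := ((n - 3)%:R : R).

Lemma degree_U4 (i : 'I_n) : degree (@U4 n) i = U4_vec n (n - 3)%N 4 2 1 1 i.
Proof.
rewrite degreeE (eq_bigr (fun j : 'I_n => if U4_adj n j i then 1 else 0)%N).
  by rewrite (sum_U4_adj (fun=> 1%N)) // sum_nat_const_nat; congr U4_vec; lia.
by move=> j _; rewrite /U4 /U4_adj orbC.
Qed.

Lemma U4_mulmx (a b c d e : R) (j : 'I_n) :
  ((\row_(k < n) U4_vec n a b c d e k) *m psombor_mx p (@U4 n)) 0 j =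
  U4_vec n (b * w 4 m + c * w 2 m + d * w 1 m *+ (n - 5)%N)
           (a * w m 4 + c * w 2 4 + e * w 1 4 *+ 2)
           (a * w m 2 + b * w 4 2) (a * w m 1) (b * w 4 1) j.
Proof.
pose deg k : R := (U4_vec n (n - 3)%N 4%N 2%N 1%N 1%N k)%:R.
pose F k := U4_vec n a b c d e k * w (deg k) (deg j).
rewrite mxE (eq_bigr (fun i : 'I_n => if U4_adj n i j then F i else 0)); last first.
  move=> i _; rewrite psombor_mxE !mxE !degree_U4.
  by rewrite /U4 -/(U4_adj n i j); case: ifP; rewrite ?mulr0.
have mid : \sum_(3 <= i < n - 2) F i = d * w 1 (deg j) *+ (n - 5)%N.
  rewrite (_ : (n - 5 = n - 2 - 3)%N) -?sumr_const_nat; last lia.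
  by apply: eq_big_nat => i i_px; rewrite /F /deg !(U4_vec_px _ _ _ _ _ i_px).
have F_py k : (n - 2 <= k)%N -> F k = e * w 1 (deg j).
  move=> k_py; have k3 : (3 <= k)%N by lia.
  by rewrite /F /deg !(U4_vec_py _ _ _ _ _ k3 k_py).
have py2 : (n - 2 <= n - 1)%N by lia.
rewrite (sum_U4_adj _ n_ge7) {}mid (F_py _ (leqnn _)) (F_py _ py2).
rewrite /F /deg; clear F_py F deg.
move: (ltn_ord j); case: (U4_classP n j) => [| | |k k_x|k k_y1 k_y2] k_lt.
all: by rewrite /U4_vec /=; decide_nat_bools; rewrite ?mulr2n.
Qed.

End U4Matrix.

Section QuotientRoots.
Variable R : rcfType.

Lemma poly_root_between (P : {poly R}) a b :
  a <= b -> P.[a] <= 0 -> 0 <= P.[b] -> exists2 r, a <= r <= b & P.[r] = 0.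
Proof.
move=> ab Pa Pb; have : 0 \in `[P.[a], P.[b]] by rewrite in_itv /= Pa Pb.
by case/(poly_ivt ab) => r r_ab /rootP Pr; exists r.
Qed.

Lemma sqrtr_le (a b : R) : 0 <= b -> a <= b ^+ 2 -> Num.sqrt a <= b.
Proof. by move=> b_ge0 /ler_wsqrtr; rewrite sqrtr_sqr ger0_norm. Qed.

(* The characteristic equation of the quotient matrix of U5 once the eigenvector is eliminated
   (see [U5_quotient_solution]). *)
Lemma U5_secular_root (f g S M : R) : 0 <= f -> 0 <= g -> 0 <= M -> M <= S ->
  exists r, [/\ 0 <= r, S <= r ^+ 2 & r * (r - g) * (r ^+ 2 - S) = 2 * f ^+ 2 * (r ^+ 2 - M)].
Proof.
move=> f_ge0 g_ge0 M_ge0 MS.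
pose P : {poly R} := 'X * ('X - g%:P) * ('X ^+ 2 - S%:P) - (2 * f ^+ 2) *: ('X ^+ 2 - M%:P).
have PE x : P.[x] = x * (x - g) * (x ^+ 2 - S) - 2 * f ^+ 2 * (x ^+ 2 - M).
  by rewrite /P !hornerE.
pose T := S + g + 2 * f ^+ 2 + 1.
have f2_ge0 : 0 <= f ^+ 2 := sqr_ge0 f.
have S_ge0 : 0 <= S by lra.
have T1_ge0 : 0 <= T - 1 by rewrite /T; lra.
have Tf_ge0 : 0 <= (T - 1) * (T - 2 * f ^+ 2) by rewrite mulr_ge0 // /T; lra.
have h1 : 2 * f ^+ 2 * T <= T ^+ 2 - S by rewrite /T in Tf_ge0 *; nra.
have h2 : T ^+ 2 - S <= (T - g) * (T ^+ 2 - S).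
  by rewrite -[leLHS]mul1r ler_wpM2r /T; nra.
have [r /andP[Sr rT] Pr] : exists2 r, Num.sqrt S <= r <= T & P.[r] = 0.
  apply: poly_root_between; first by apply: sqrtr_le; rewrite /T; nra.
    by rewrite PE sqr_sqrtr // subrr mulr0 add0r; nra.
  rewrite PE; nra.
have r_ge0 : 0 <= r by apply: le_trans Sr; exact: sqrtr_ge0.
exists r; split => //; last by move: Pr; rewrite PE => /eqP; rewrite subr_eq0 => /eqP.
by rewrite -(sqr_sqrtr S_ge0) ler_sqr ?nnegrE ?sqrtr_ge0.
Qed.

Lemma U5_quotient_solution (f g h d N : R) :
  0 < f -> 0 < g -> 0 < d -> 0 <= N -> g < h ->
  exists r X1 X3 X4 : R,
    [/\ 0 < X1, 0 < X3, 0 < X4 & N * d ^+ 2 + h ^+ 2 <= r ^+ 2] /\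
    [/\ 2 * f * X1 + h * X3 = r, f + g * X1 = r * X1,
        h + N * d * X4 = r * X3 & d * X3 = r * X4].
Proof.
move=> f_gt0 g_gt0 d_gt0 N_ge0 gh.
have Nd_ge0 : 0 <= N * d ^+ 2 by rewrite mulr_ge0 ?sqr_ge0.
have NdS : N * d ^+ 2 <= N * d ^+ 2 + h ^+ 2 by rewrite lerDl sqr_ge0.
have [r [r_ge0 Sr secular]] := U5_secular_root (ltW f_gt0) (ltW g_gt0) Nd_ge0 NdS.
have hr : h <= r by rewrite -ler_sqr ?nnegrE //; [nra | lra].
have r_gt0 : 0 < r by lra.
have rg_gt0 : 0 < r - g by lra.
pose D := r ^+ 2 - N * d ^+ 2.
have D_gt0 : 0 < D by rewrite /D; nra.
exists r, (f / (r - g)), (h * r / D), (d * (h * r / D) / r).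
split; first by split => //; rewrite ?(divr_gt0, mulr_gt0) //; lra.
have [rg_neq0 D_neq0 r_neq0] : [/\ r - g != 0, D != 0 & r != 0].
  by split; apply: lt0r_neq0.
split; [|by field; rewrite rg_neq0|by rewrite /D in D_neq0 *; field; rewrite D_neq0 r_neq0|
         by field; rewrite r_neq0 D_neq0].
have secularD : r * (r - g) * (D - h ^+ 2) = 2 * f ^+ 2 * D by rewrite /D -secular; ring.
apply/eqP; rewrite -subr_eq0; apply/eqP.
transitivity ((2 * f ^+ 2 * D - r * (r - g) * (D - h ^+ 2)) / ((r - g) * D)).
  by field; rewrite rg_neq0 D_neq0.
by rewrite secularD subrr mul0r.
Qed.

(* Likewise for U4 (see [U4_quotient_solution]). *)
Lemma U4_secular_root (a bc K B : R) : 0 <= a -> 0 <= bc -> 0 <= K -> 0 <= B ->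
  exists r, [/\ 0 <= r, K <= r ^+ 2, B <= r ^+ 2 & (r ^+ 2 - K) * (r ^+ 2 - B) = (a * r + bc) ^+ 2].
Proof.
move=> a_ge0 bc_ge0 K_ge0 B_ge0.
pose P : {poly R} := ('X ^+ 2 - K%:P) * ('X ^+ 2 - B%:P) - (a *: 'X + bc%:P) ^+ 2.
have PE x : P.[x] = (x ^+ 2 - K) * (x ^+ 2 - B) - (a * x + bc) ^+ 2.
  by rewrite /P !hornerE.
pose L := Num.max K B; pose T := K + B + a + bc + 1.
have L_ge0 : 0 <= L by rewrite le_max K_ge0.
have [KL BL] : K <= L /\ B <= L by split; rewrite le_max lexx ?orbT.
have LKB : (L - K) * (L - B) = 0 by rewrite /L; case: leP => _; rewrite subrr ?mulr0 ?mul0r.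
have T_ge1 : 1 <= T by rewrite /T; lra.
have Tx_ge0 : 0 <= a * T + bc by rewrite addr_ge0 ?mulr_ge0 //; lra.
have TK : a * T + bc <= T ^+ 2 - K by rewrite /T; nra.
have TB : a * T + bc <= T ^+ 2 - B by rewrite /T; nra.
have [r /andP[Lr rT] Pr] : exists2 r, Num.sqrt L <= r <= T & P.[r] = 0.
  have LT : L <= T by rewrite ge_max /T; apply/andP; split; lra.
  apply: poly_root_between; first by apply: sqrtr_le; nra.
    by rewrite PE sqr_sqrtr // LKB sub0r oppr_le0 sqr_ge0.
  by rewrite PE subr_ge0 expr2 ler_pM.
have r_ge0 : 0 <= r by apply: le_trans Lr; exact: sqrtr_ge0.
have Lr2 : L <= r ^+ 2 by rewrite -(sqr_sqrtr L_ge0) ler_sqr ?nnegrE ?sqrtr_ge0.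
exists r; split; rewrite ?(le_trans KL) ?(le_trans BL) //.
by move: Pr; rewrite PE => /eqP; rewrite subr_eq0 => /eqP.
Qed.

Lemma U4_quotient_solution (a b c d e M : R) :
  0 < a -> 0 < b -> 0 < c -> 0 < d -> 0 < e -> 0 <= M ->
  exists r T1 T2 Yp Yq : R,
    [/\ 0 < T1, 0 < T2, 0 < Yp & 0 < Yq] /\
    [/\ a * T1 + b * T2 + M * d * Yp = r, a + c * T2 + 2 * e * Yq = r * T1,
        b + c * T1 = r * T2, d = r * Yp & e * T1 = r * Yq].
Proof.
move=> a_gt0 b_gt0 c_gt0 d_gt0 e_gt0 M_ge0.
pose K := c ^+ 2 + 2 * e ^+ 2; pose B := b ^+ 2 + M * d ^+ 2.
have K_gt0 : 0 < K by rewrite /K; nra.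
have B_gt0 : 0 < B by rewrite /B; nra.
have bc_gt0 : 0 < b * c by rewrite mulr_gt0.
have [r [r_ge0 Kr Br secular]] := U4_secular_root (ltW a_gt0) (ltW bc_gt0) (ltW K_gt0) (ltW B_gt0).
have ar_bc_gt0 : 0 < a * r + b * c by rewrite ltr_wpDl ?mulr_ge0 // ltW.
have rK_gt0 : 0 < r ^+ 2 - K.
  have prod_gt0 : 0 < (r ^+ 2 - K) * (r ^+ 2 - B) by rewrite secular exprn_gt0.
  rewrite lt_def subr_ge0 Kr andbT.
  by apply: contraTneq prod_gt0 => ->; rewrite mul0r ltxx.
have r_gt0 : 0 < r by nra.
have [r_neq0 rK_neq0] : r != 0 /\ r ^+ 2 - K != 0 by split; apply: lt0r_neq0.
pose T1 := (a * r + b * c) / (r ^+ 2 - K).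
have T1_gt0 : 0 < T1 by rewrite divr_gt0.
exists r, T1, ((b + c * T1) / r), (d / r), (e * T1 / r).
split; first split => //.
- by rewrite divr_gt0 // addr_gt0 // mulr_gt0.
- by rewrite divr_gt0.
- by rewrite divr_gt0 // mulr_gt0.
rewrite /T1 /K in rK_neq0 *.
split; try by field; rewrite ?r_neq0 ?rK_neq0.
apply/eqP; rewrite -subr_eq0; apply/eqP.
transitivity (((a * r + b * c) ^+ 2 - (r ^+ 2 - K) * (r ^+ 2 - B)) / (r * (r ^+ 2 - K))).
  by rewrite /K /B; field; rewrite r_neq0 rK_neq0.
by rewrite secular subrr mul0r.
Qed.

End QuotientRoots.

Section TestVectorBounds.
Variable R : realFieldType.

Lemma hub_row_lt (r X3 X4 h a d b c N : R) :
  0 < r -> 0 < X3 -> 0 < b -> 0 < c -> 0 <= d <= b -> h <= a ->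
  1 * h + X4 * d * (N + 1) = r * X3 -> X3 * d = r * X4 ->
  r * X3 < 1 * a + (b * X3 + c) / r * b + X4 * d * N.
Proof.
move=> r_gt0 X3_gt0 b_gt0 c_gt0 /andP[d_ge0 db] ha e3 e4.
have pendant_lt : X4 * d < (b * X3 + c) / r * b.
  rewrite -(ltr_pM2l r_gt0) mulrA -e4.
  have -> : r * ((b * X3 + c) / r * b) = (b * X3 + c) * b by field; rewrite gt_eqF.
  have : X3 * d * d <= X3 * b * b by rewrite -!mulrA ler_wpM2l ?(ltW X3_gt0) ?ler_pM.
  nra.
rewrite -e3; nra.
Qed.

Lemma y_row_le (r X1 X3 f g h a c e q : R) :
  8 <= r -> 0 < f -> f ^+ 2 <= 3 ^+ 2 + 2 ^+ 2 -> 0 <= g -> g ^+ 2 <= 2 ^+ 2 + 2 ^+ 2 ->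
  0 < X3 -> h <= a -> 4 <= c -> 4 <= e -> c <= r * q ->
  X1 * f *+ 2 + X3 * h = r * 1 -> 1 * f + X1 * g = r * X1 ->
  r * 1 <= X3 * a + q * c + e / r * e *+ 2.
Proof.
move=> r_ge8 f_gt0 f_le g_ge0 g_le X3_gt0 ha c_ge4 e_ge4 cq e0 e12.
have g_le3 : g <= 3 by nra.
have r_gt0 : 0 < r by lra.
have X1E : X1 * (r - g) = f by rewrite mulrBr mulrC -e12; ring.
have K_ge : 2 * f * X1 * r <= c ^+ 2 + 2 * e ^+ 2.
  have : 2 * f * X1 * r * (r - g) <= (c ^+ 2 + 2 * e ^+ 2) * (r - g).
    have -> : 2 * f * X1 * r * (r - g) = 2 * f ^+ 2 * r by rewrite -X1E; ring.
    have K48 : 48 <= c ^+ 2 + 2 * e ^+ 2 by nra.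
    have : 2 * f ^+ 2 * r <= 26 * r by rewrite ler_pM2r //; lra.
    have : 48 * (r - g) <= (c ^+ 2 + 2 * e ^+ 2) * (r - g) by rewrite ler_pM2r //; lra.
    lra.
  by rewrite ler_pM2r //; lra.
have e2 : e / r * e *+ 2 = 2 * e ^+ 2 / r by rewrite mulr2n; field; rewrite gt_eqF.
have cq' : c ^+ 2 / r <= q * c.
  by rewrite ler_pdivrMr // expr2 mulrC [leRHS]mulrAC ler_wpM2r //; lra.
have fX1 : 2 * f * X1 <= (c ^+ 2 + 2 * e ^+ 2) / r by rewrite ler_pdivlMr.
rewrite -e0 e2; rewrite mulrDl in fX1; nra.
Qed.

End TestVectorBounds.

Lemma U4_vec_rel {T : Type} (P : rel T) n a b c d e a' b' c' d' e' k :
  P a a' -> P b b' -> P c c' -> P d d' -> P e e' ->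
  P (U4_vec n a b c d e k) (U4_vec n a' b' c' d' e' k).
Proof. by rewrite /U4_vec; do 4?case: ifP. Qed.

Lemma U4_vec_map {T T' : Type} (f : T -> T') n a b c d e k :
  f (U4_vec n a b c d e k) = U4_vec n (f a) (f b) (f c) (f d) (f e) k.
Proof. by rewrite /U4_vec; do 4?case: ifP. Qed.

Lemma psombor_mx_ge0 (R : realType) n (p : R) (e : rel 'I_n) i j : 0 <= psombor_mx p e i j.
Proof. by rewrite psombor_mxE; case: ifP => _; rewrite ?sombor_weight_ge0. Qed.

Lemma psombor_mx_sym (R : realType) n (p : R) (e : rel 'I_n) : symmetric e ->
  forall i j, psombor_mx p e i j = psombor_mx p e j i.
Proof. by move=> e_sym i j; rewrite !psombor_mxE e_sym sombor_weightC. Qed.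

Lemma U4_sym n : symmetric (@U4 n).
Proof. by move=> i j; rewrite /U4 orbC. Qed.

Section Spectra.
Variables (R : realType) (n : nat) (p : R).
Hypotheses (n_ge7 : (7 <= n)%N) (p_ge2 : 2 <= p).
Local Notation w := (sombor_weight p).
Local Notation m := ((n - 3)%:R : R).

Let p_gt0 : 0 < p. Proof. exact: lt_le_trans p_ge2. Qed.
Let n_gt0 : (0 < n)%N. Proof. exact: leq_trans n_ge7. Qed.

Let w_gt0 x y : 0 < x -> 0 <= y -> 0 < w x y.
Proof. by move=> x_gt0 _; apply: sombor_weight_gt0. Qed.

Let w_gel x y : 0 <= x -> 0 <= y -> x <= w x y.
Proof. by move=> x_ge0 _; apply: sombor_weight_gel. Qed.

Lemma U5_quotient_exists (M N : R) : 4 <= M -> 3 <= N ->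
  exists r X1 X3 X4 : R, [/\ 0 < X1, 0 < X3, 0 < X4 & 8 <= r] /\
    [/\ X1 * w 2 3 *+ 2 + X3 * w M 3 = r * 1, 1 * w 3 2 + X1 * w 2 2 = r * X1,
        1 * w 3 M + X4 * w 1 M * N = r * X3 & X3 * w M 1 = r * X4].
Proof.
move=> M_ge4 N_ge3; have M_gt0 : 0 < M by lra.
have z1 : 0 <= 1 :> R := ler0n _ 1.
have z2 : 0 <= 2 :> R := ler0n _ 2.
have z3 : 0 <= 3 :> R := ler0n _ 3.
have f_gt0 : 0 < w 3 2 := w_gt0 (ltr0Sn _ 2) z2.
have g_gt0 : 0 < w 2 2 := w_gt0 (ltr0Sn _ 1) z2.
have g_le : w 2 2 ^+ 2 <= 2 ^+ 2 + 2 ^+ 2 := sombor_weight_sqr_le p_ge2 z2 z2.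
have h_ge4 : 4 <= w 3 M by rewrite sombor_weightC (le_trans M_ge4 (w_gel (ltW M_gt0) z3)).
have d_ge4 : 4 <= w M 1 := le_trans M_ge4 (w_gel (ltW M_gt0) z1).
rewrite (sombor_weightC p 2 3) (sombor_weightC p M 3) (sombor_weightC p 1 M).
move: (w 3 2) (w 2 2) (w 3 M) (w M 1) f_gt0 g_gt0 g_le h_ge4 d_ge4.
move=> f g h d f_gt0 g_gt0 g_le h_ge4 d_ge4.
have d_gt0 : 0 < d by lra.
have N_ge0 : 0 <= N by lra.
have gh : g < h by nra.
have [r [X1 [X3 [X4 [[X1_gt0 X3_gt0 X4_gt0 r_bound] [e0 e12 e3 e4]]]]]] :=
  U5_quotient_solution f_gt0 g_gt0 d_gt0 N_ge0 gh.
have r_gt0 : 0 < r by rewrite -e0 addr_gt0 ?mulr_gt0 //; lra.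
have r_ge8 : 8 <= r.
  have : 8 ^+ 2 <= r ^+ 2 by apply: le_trans r_bound; nra.
  by rewrite ler_sqr ?nnegrE //; lra.
exists r, X1, X3, X4; split; first by split.
by split; [rewrite -e0 | rewrite -e12 | rewrite -e3 | rewrite -e4]; ring.
Qed.

Lemma U5_largest_eigenvalue r X1 X3 X4 : 0 < X1 -> 0 < X3 -> 0 < X4 ->
  [/\ X1 * w 2 3 *+ 2 + X3 * w m 3 = r * 1, 1 * w 3 2 + X1 * w 2 2 = r * X1,
      1 * w 3 m + X4 * w 1 m * (n - 4)%:R = r * X3 & X3 * w m 1 = r * X4] ->
  is_largest_eigenvalue (psombor_mx p (@U5 n)) r.
Proof.
move=> X1_gt0 X3_gt0 X4_gt0 [e0 e12 e3 e4].
apply: (largest_eigenvalue_pos_eigenvector (x := \row_k U5_vec 1 X1 X3 X4 k)).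
- exact: n_gt0.
- exact: psombor_mx_ge0.
- by move=> i; rewrite mxE /U5_vec; do 3?case: ifP => _; rewrite ?ltr01.
apply/rowP => j; rewrite U5_mulmx; last exact: n_ge7.
rewrite !mxE (U5_vec_map ( *%R r)).
by congr U5_vec; [exact: e0 | exact: e12 | rewrite -[X4 * _ *+ _]mulr_natr; exact: e3 | exact: e4].
Qed.

Lemma U4_quotient_exists (M N : R) : 4 <= M -> 0 <= N ->
  exists r T1 T2 Yp Yq : R, [/\ 0 < T1, 0 < T2, 0 < Yp & 0 < Yq] /\
    [/\ T1 * w 4 M + T2 * w 2 M + Yp * w 1 M * N = r * 1,
        1 * w M 4 + T2 * w 2 4 + Yq * w 1 4 *+ 2 = r * T1,
        1 * w M 2 + T1 * w 4 2 = r * T2, 1 * w M 1 = r * Yp & T1 * w 4 1 = r * Yq].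
Proof.
move=> M_ge4 N_ge0; have M_gt0 : 0 < M by lra.
have z1 : 0 <= 1 :> R := ler0n _ 1.
have z2 : 0 <= 2 :> R := ler0n _ 2.
have z4 : 0 <= 4 :> R := ler0n _ 4.
have a_gt0 : 0 < w M 4 := w_gt0 M_gt0 z4.
have b_gt0 : 0 < w M 2 := w_gt0 M_gt0 z2.
have c_gt0 : 0 < w 4 2 := w_gt0 (ltr0Sn _ 3) z2.
have d_gt0 : 0 < w M 1 := w_gt0 M_gt0 z1.
have e_gt0 : 0 < w 4 1 := w_gt0 (ltr0Sn _ 3) z1.
rewrite (sombor_weightC p 4 M) (sombor_weightC p 2 M) (sombor_weightC p 1 M).
rewrite (sombor_weightC p 2 4) (sombor_weightC p 1 4).
move: (w M 4) (w M 2) (w 4 2) (w M 1) (w 4 1) a_gt0 b_gt0 c_gt0 d_gt0 e_gt0.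
move=> a b c d e a_gt0 b_gt0 c_gt0 d_gt0 e_gt0.
have [r [T1 [T2 [Yp [Yq [pos [e0 e1 e2 e3 e4]]]]]]] :=
  U4_quotient_solution a_gt0 b_gt0 c_gt0 d_gt0 e_gt0 N_ge0.
exists r, T1, T2, Yp, Yq; split; first exact: pos.
by split; [rewrite -e0 | rewrite -e1 | rewrite -e2 | rewrite -e3 | rewrite -e4]; ring.
Qed.

Lemma U4_pos_eigenvector :
  exists r (x : 'rV[R]_n), (forall i, 0 < x 0 i) /\ x *m psombor_mx p (@U4 n) = r *: x.
Proof.
have m_ge4 : 4 <= m by rewrite ler_nat; lia.
have [r [T1 [T2 [Yp [Yq [[T1_gt0 T2_gt0 Yp_gt0 Yq_gt0] [e0 e1 e2 e3 e4]]]]]]] :=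
  U4_quotient_exists m_ge4 (ler0n _ (n - 5)).
exists r, (\row_k U4_vec n 1 T1 T2 Yp Yq k); split.
  by move=> i; rewrite mxE /U4_vec; do 4?case: ifP => _; rewrite ?ltr01.
apply/rowP => j; rewrite U4_mulmx; last exact: n_ge7.
rewrite !mxE (U4_vec_map ( *%R r)).
congr U4_vec; [rewrite -[Yp * _ *+ _]mulr_natr; exact: e0 | exact: e1 | exact: e2 |
               exact: e3 | exact: e4].
Qed.

Let m_gt0 : 0 < m. Proof. by rewrite ltr0n; lia. Qed.
Let n45 : (n - 4 = (n - 5).+1)%N. Proof. lia. Qed.
Let o12 : 0 <= (1 : R) <= 2. Proof. by apply/andP; split; lra. Qed.
Let o34 : 0 <= (3 : R) <= 4. Proof. by apply/andP; split; lra. Qed.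

Section Comparison.
Variables (r5 X1 X3 X4 : R).
Hypotheses (X3_gt0 : 0 < X3) (X4_gt0 : 0 < X4) (r5_ge8 : 8 <= r5).
Hypotheses (e0 : X1 * w 2 3 *+ 2 + X3 * w m 3 = r5 * 1)
           (e12 : 1 * w 3 2 + X1 * w 2 2 = r5 * X1)
           (e3 : 1 * w 3 m + X4 * w 1 m * (n - 4)%:R = r5 * X3)
           (e4 : X3 * w m 1 = r5 * X4).

Let r5_gt0 : 0 < r5. Proof. exact: lt_le_trans (ltr0Sn _ 7) r5_ge8. Qed.

Local Notation q := ((w m 2 * X3 + w 4 2) / r5).

Lemma test_vector_hub_lt : r5 * X3 < 1 * w 4 m + q * w 2 m + X4 * w 1 m *+ (n - 5).
Proof.
have z2 : 0 <= 2 :> R := ler0n _ 2.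
have mm : 0 <= m <= m by rewrite lexx ltW.
have db : 0 <= w 1 m <= w m 2.
  by rewrite sombor_weight_ge0 (sombor_weightC p m 2) (sombor_weight_le p_gt0 o12 mm).
have ha : w 3 m <= w 4 m := sombor_weight_le p_gt0 o34 mm.
have N41 : (n - 4)%:R = (n - 5)%:R + 1 :> R by rewrite natr1 n45.
have e3' : 1 * w 3 m + X4 * w 1 m * ((n - 5)%:R + 1) = r5 * X3 by rewrite -N41.
have e4' : X3 * w 1 m = r5 * X4 by rewrite sombor_weightC.
rewrite -[X4 * _ *+ _]mulr_natr (sombor_weightC p 2 m).
exact: (hub_row_lt r5_gt0 X3_gt0 (w_gt0 m_gt0 z2) (w_gt0 (ltr0Sn _ 3) z2) db ha e3' e4').
Qed.

Lemma test_vector_y_le : r5 * 1 <= X3 * w m 4 + q * w 2 4 + w 4 1 / r5 * w 1 4 *+ 2.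
Proof.
have z1 : 0 <= 1 :> R := ler0n _ 1.
have z2 : 0 <= 2 :> R := ler0n _ 2.
have z3 : 0 <= 3 :> R := ler0n _ 3.
have z4 : 0 <= 4 :> R := ler0n _ 4.
have mm : 0 <= m <= m by rewrite lexx ltW.
have c4 : 4 <= w 2 4 by rewrite sombor_weightC; exact: w_gel z4 z2.
have e4' : 4 <= w 1 4 by rewrite sombor_weightC; exact: w_gel z4 z1.
have cq : w 2 4 <= r5 * q.
  rewrite [r5 * _]mulrC divfK ?gt_eqF // (sombor_weightC p 2 4) lerDr.
  by rewrite mulr_ge0 ?sombor_weight_ge0 ?ltW.
have e0' : X1 * w 3 2 *+ 2 + X3 * w m 3 = r5 * 1 by rewrite sombor_weightC.
rewrite (sombor_weightC p 4 1).
exact: (y_row_le r5_ge8 (w_gt0 (ltr0Sn _ 2) z2) (sombor_weight_sqr_le p_ge2 z3 z2)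
  (sombor_weight_ge0 p 2 2) (sombor_weight_sqr_le p_ge2 z2 z2) X3_gt0
  (sombor_weight_le p_gt0 mm o34) c4 e4' cq e0' e12).
Qed.

Lemma U5_eigenvalue_lt_U4 r4 (x4 : 'rV[R]_n) :
  (forall i, 0 < x4 0 i) -> x4 *m psombor_mx p (@U4 n) = r4 *: x4 -> r5 < r4.
Proof.
move=> x4_gt0 x4A.
(* The Perron vector of U5 moved onto U4 (w to x, x to y, pendants to pendants); the values q
   at z and w(4,1)/r5 at the pendants of y make those rows of y A = r5 y exact. *)
pose y := \row_(k < n) U4_vec n X3 1 q X4 (w 4 1 / r5) k.
have q_ge0 : 0 <= q by rewrite divr_ge0 ?addr_ge0 ?mulr_ge0 ?sombor_weight_ge0 ?ltW.
have e_ge0 : 0 <= w 4 1 / r5 by rewrite divr_ge0 ?sombor_weight_ge0 ?ltW.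
apply: (strict_subeigenvector_lt x4_gt0 x4A (psombor_mx_sym p (@U4_sym n)) (y := y)
         (j0 := Ordinal n_gt0)).
- have [X3_ge0 X4_ge0] := (ltW X3_gt0, ltW X4_gt0).
  by move=> j; rewrite mxE /U4_vec; do 4?case: ifP => _; rewrite ?ler01.
- move=> j; rewrite U4_mulmx; last exact: n_ge7.
  rewrite !mxE (U4_vec_map ( *%R r5)).
  apply: (U4_vec_rel (P := <=%R)); [exact: ltW test_vector_hub_lt | exact: test_vector_y_le | | | ].
  + by rewrite mulrC divfK ?gt_eqF // mul1r [X3 * _]mulrC.
  + by rewrite -e4.
  + by rewrite mulrC divfK ?gt_eqF // mul1r.
rewrite U4_mulmx; last exact: n_ge7.
by rewrite !mxE /U4_vec /=; exact: test_vector_hub_lt.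
Qed.

End Comparison.

End Spectra.

Unset Implicit Arguments.
Theorem lemma4p1 (R : realType) (n : nat) (p : R) (hn : (7 <= n)%N) (hp : 2 <= p) :
  exists r5 r4 : R,
    [/\ is_largest_eigenvalue (psombor_mx p (@U5 n)) r5,
        is_largest_eigenvalue (psombor_mx p (@U4 n)) r4 & r5 < r4].
Proof.
have m_ge4 : 4 <= (n - 3)%:R :> R by rewrite ler_nat; lia.
have N_ge3 : 3 <= (n - 4)%:R :> R by rewrite ler_nat; lia.
have [r5 [X1 [X3 [X4 [[X1_gt0 X3_gt0 X4_gt0 r5_ge8] [e0 e12 e3 e4]]]]]] :=
  U5_quotient_exists hp m_ge4 N_ge3.
have [r4 [x4 [x4_gt0 x4A]]] := U4_pos_eigenvector hn hp.
exists r5, r4; split.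
- by apply: (U5_largest_eigenvalue hn X1_gt0 X3_gt0 X4_gt0); split.
- apply: (largest_eigenvalue_pos_eigenvector _ _ x4_gt0 x4A); first lia.
  exact: psombor_mx_ge0.
- by apply: (U5_eigenvalue_lt_U4 hn hp X3_gt0 X4_gt0 r5_ge8 e0 e12 e3 e4 x4_gt0 x4A).
Qed.
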